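(* Let $K$ be a field, $P=K[x_1,\dots,x_n]$, $g_1,\dots,g_r\in P$, $I=\langle g_1,\dots,g_r\rangle$, and let $Z=(z_1,\dots,z_s)$ be a tuple of distinct indeterminates among $x_1,\dots,x_n$. The procedure $\mathrm{CHECK}$ applied to $(g_1,\dots,g_r)$ and $Z$ terminates after finitely many steps and returns either ``Fail'' or a tuple $W=(w_1,\dots,w_n)\in\mathbb{N}^n$. If it returns a tuple $W$, then there exist $f_1,\dots,f_s\in\langle g_1,\dots,g_r\rangle_K$ such that for every term ordering $\sigma$ on $P$ compatible with the grading given by $W$ we have $\operatorname{LT}_\sigma(f_i)=z_i$ for $i=1,\dots,s$; in particular $(f_1,\dots,f_s)$ is a $Z$-separating tuple of polynomials in $I$.
   Context: $\operatorname{Supp}(f)$ is the set of terms occurring in $f$; $\operatorname{Lin}(f)$ is the homogeneous degree-1 component of $f$; $\langle\cdot\rangle_K$ denotes $K$-linear span. A tuple $(f_1,\dots,f_s)$ of polynomials in an ideal $I$ is $Z$-separating if there is a term ordering $\sigma$ with $\operatorname{LT}_\sigma(f_i)=z_i$ for all $i$. For $W=(w_1,\dots,w_n)$, the $W$-degree of a term $x_1^{a_1}\cdots x_n^{a_n}$ is $\sum w_ia_i$; a term ordering $\sigma$ is compatible with the grading given by $W$ if $t>_\sigma t'$ whenever the $W$-degree of $t$ exceeds that of $t'$. Procedure $\mathrm{LI}$ (linear interreduction), applied to a tuple $Z=(z_1,\dots,z_s)$ of distinct indeterminates and polynomials $g_1,\dots,g_r$: let $t_1>\dots>t_m$ (lexicographic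 order, $x_1>\dots>x_n$) be the terms of $\bigcup_j\operatorname{Supp}(g_j)$ other than $z_1,\dots,z_s$; form the coefficient matrix $M$ of $g_1,\dots,g_r$ w.r.t. column order $(z_1,\dots,z_s,t_1,\dots,t_m)$; output the polynomials whose coefficient vectors are the nonzero rows of the reduced row echelon form of $M$, in order. Procedure $\mathrm{CHECK}$ on input $(g_1,\dots,g_r)$ and $Z$: (1) set $w_1=\dots=w_n=0$, $\delta=\max_j\deg(g_j)$, $d=1$. (2) In each $g_j$ delete every monomial not divisible by some indeterminate of $Z$. (3) If $\dim_K\langle\operatorname{Lin}(g_1),\dots,\operatorname{Lin}(g_r)\rangle_K<\#Z$, return ``Fail''. (4) Repeat: (i) replace the current list $g_1,\dots,g_r$ by the output of $\mathrm{LI}$ applied to the current $Z$ and the current list; (ii) let $\widetilde Z$ be the set of indeterminates of the current $Z$ that occur as elements of the current list; (iii) if $\widetilde Z=\emptyset$, return ``Fail''; (iv) for each $z\in\widetilde Z$, say $z=x_k$, set $w_k=d$ and remove $z$ from $Z$; (v) in each current $g_j$ delete every monomial not divisible by some indeterminate of the (updated) $Z$; (vi) replace $d$ by $\delta d+1$; until $Z$ is empty. (5) Return $W=(w_1,\dots,w_n)$. *)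

From HB Require Import structures.
From mathcomp Require Import all_boot all_order all_algebra.
From mathcomp Require Import mpoly.
Set Implicit Arguments.
Unset Strict Implicit.
Unset Printing Implicit Defensive.
Import Order.TTheory GRing.Theory.
Local Open Scope ring_scope.

Section Defs.
Variables (K : fieldType) (n : nat).
Local Notation poly := {mpoly K[n]}.
Local Notation term := 'X_{1..n}.

(* total degree of a polynomial (0 for the zero polynomial) *)
Definition tdeg (g : poly) : nat := (\max_(m <- msupp g) mdeg m)%N.

Definition inKSpan (gs : seq poly) (p : poly) : Prop :=
  exists c : 'I_(size gs) -> K, p = \sum_(i < size gs) c i *: gs`_i.

Definition inIdeal (gs : seq poly) (p : poly) : Prop :=
  exists c : 'I_(size gs) -> poly, p = \sum_(i < size gs) c i * gs`_i.

(* term orderings on the monoid of terms (multiplication of terms = addition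
   of exponent vectors, 1 = the zero exponent vector) *)
Definition termOrdering (le : rel term) : Prop :=
  [/\ reflexive le, antisymmetric le, transitive le & total le] /\
  (forall t t1 t2, le t1 t2 -> le (t + t1)%MM (t + t2)%MM) /\
  (forall t, le 0%MM t).

Definition LTis (le : rel term) (f : poly) (t : term) : Prop :=
  t \in msupp f /\ forall m, m \in msupp f -> le m t.

Definition wdeg (W : 'I_n -> nat) (t : term) : nat := (\sum_(i < n) W i * t i)%N.

Definition compatible (W : 'I_n -> nat) (le : rel term) : Prop :=
  forall t t', (wdeg W t' < wdeg W t)%N -> le t' t && (t' != t).

Definition ZSeparating s (gs : seq poly) (Z : s.-tuple 'I_n) (f : 'I_s -> poly)
  : Prop :=
  (forall i, inIdeal gs (f i)) /\
  exists le : rel term, termOrdering le /\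
    forall i, LTis le (f i) U_(tnth Z i)%MM.

(* lexicographic order on terms, x_1 > ... > x_n (x_1 is index 0) *)
Definition lexLt (m1 m2 : term) : bool :=
  [exists k : 'I_n, [forall i : 'I_n, (i < k)%N ==> (m1 i == m2 i)]
                    && (m1 k < m2 k)%N].

(* position of the term m among z_1,..,z_s (size Z if m is not one of them) *)
Definition zIndex (Z : seq 'I_n) (m : term) : nat :=
  find (fun z => m == U_(z)%MM) Z.

(* column order (z_1,..,z_s,t_1,..,t_m): colLt Z m1 m2 means that the column
   of m1 comes strictly before the column of m2 *)
Definition colLt (Z : seq 'I_n) (m1 m2 : term) : bool :=
  if (zIndex Z m1 < size Z)%N then (zIndex Z m1 < zIndex Z m2)%N
  else (zIndex Z m2 == size Z) && lexLt m2 m1.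

(* m is the pivot (leading column) of the coefficient row of h *)
Definition isPivot (Z : seq 'I_n) (h : poly) (m : term) : Prop :=
  m \in msupp h /\ forall m', m' \in msupp h -> m' != m -> colLt Z m m'.

(* hs = LI(Z; gs): hs are the polynomials whose coefficient vectors are the
   nonzero rows of the reduced row echelon form of the coefficient matrix of
   gs w.r.t. the column order above, listed in order. *)
Definition isLI (Z : seq 'I_n) (gs hs : seq poly) : Prop :=
  [/\ all (fun h => h != 0) hs,
      (forall h, h \in hs -> inKSpan gs h),
      (forall g, g \in gs -> inKSpan hs g) &
      exists piv : 'I_(size hs) -> term,
        [/\ forall i : 'I_(size hs), isPivot Z hs`_i (piv i),
            forall i j : 'I_(size hs), (i < j)%N -> colLt Z (piv i) (piv j),
            forall i : 'I_(size hs), hs`_i@_(piv i) = 1 &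
            forall i j : 'I_(size hs), i != j -> hs`_j@_(piv i) = 0]].

Definition restrictZ (Z : seq 'I_n) (p : poly) : poly :=
  \sum_(m <- msupp p | has (fun z => (0 < m z)%N) Z) p@_m *: 'X_[m].

Definition linMx (gs : seq poly) : 'M[K]_(size gs, n) :=
  \matrix_(j < size gs, i < n) gs`_j@_(U_(i)%MM).

Definition Ztilde (Z : seq 'I_n) (hs : seq poly) : seq 'I_n :=
  [seq z <- Z | 'X_z \in hs].

(* the repeat-loop of step (4); state: list gs, Z, weights w, d.
   [checkLoop delta gs Z w d res] means the loop started in this state
   terminates with result res (None = "Fail", Some W = W). *)
Inductive checkLoop (delta : nat) :
  seq poly -> seq 'I_n -> ('I_n -> nat) -> nat -> option ('I_n -> nat) -> Prop :=
| loop_fail gs Z w d hs :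
    isLI Z gs hs -> Ztilde Z hs = [::] ->
    checkLoop delta gs Z w d None
| loop_stop gs Z w d hs :
    isLI Z gs hs -> Ztilde Z hs != [::] ->
    [seq z <- Z | z \notin Ztilde Z hs] = [::] ->
    checkLoop delta gs Z w d
      (Some (fun k => if k \in Ztilde Z hs then d else w k))
| loop_next gs Z w d hs res :
    isLI Z gs hs -> Ztilde Z hs != [::] ->
    [seq z <- Z | z \notin Ztilde Z hs] != [::] ->
    checkLoop delta
      (map (restrictZ [seq z <- Z | z \notin Ztilde Z hs]) hs)
      [seq z <- Z | z \notin Ztilde Z hs]
      (fun k => if k \in Ztilde Z hs then d else w k)
      (delta * d + 1)%N res ->
    checkLoop delta gs Z w d res.

(* CHECK(gs, Z) returns res (None = "Fail", Some W = the tuple W) *)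
Inductive CHECK (gs : seq poly) (Z : seq 'I_n) : option ('I_n -> nat) -> Prop :=
| check_rank_fail :
    (\rank (linMx (map (restrictZ Z) gs)) < size Z)%N -> CHECK gs Z None
| check_loop res :
    (size Z <= \rank (linMx (map (restrictZ Z) gs)))%N ->
    checkLoop (\max_(g <- gs) tdeg g)%N (map (restrictZ Z) gs) Z
      (fun _ => 0%N) 1%N res ->
    CHECK gs Z res.

End Defs.

From HB Require Import structures.
From mathcomp Require Import all_boot all_order all_algebra.
From mathcomp Require Import mpoly.
Set Implicit Arguments.
Unset Strict Implicit.
Unset Printing Implicit Defensive.
Import Order.TTheory GRing.Theory.
Local Open Scope ring_scope.

(* LI is Gaussian elimination for the strict total order colLt on terms, so
   it has a result, and the result is unique because a reduced row echelon
   basis is determined by the span it generates.  The loop of CHECK removes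
   at least one indeterminate from Z at every step, hence terminates.

   For correctness, every polynomial h of the current list is the truncation
   of some f in <g_1,...,g_r>_K: the terms deleted so far avoid the
   indeterminates still in Z and have W-degree below the current d.  This is
   kept by the step d := delta * d + 1, since a term of degree at most delta
   has W-degree at most delta * d while all weights are at most d.  When an
   indeterminate z occurs as an element of the list at stage d, it gets
   weight d, and the f truncating to z has z as its only term of W-degree at
   least d; hence LT(f) = z for every term ordering compatible with W. *)

(** * Spans *)

Lemma mcoeff_sum (R : ringType) n m (I : Type) (r : seq I) (P : pred I)
    (F : I -> {mpoly R[n]}) :
  (\sum_(i <- r | P i) F i)@_m = \sum_(i <- r | P i) (F i)@_m.
Proof. exact: raddf_sum. Qed.

Section KSpan.
Variables (K : fieldType) (n : nat).
Implicit Types (gs hs : seq {mpoly K[n]}) (p q : {mpoly K[n]}).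

Lemma inKSpan0 gs : inKSpan gs 0.
Proof. by exists (fun _ => 0); rewrite big1 // => i _; rewrite scale0r. Qed.

Lemma inKSpanD gs p q : inKSpan gs p -> inKSpan gs q -> inKSpan gs (p + q).
Proof.
move=> [c ->] [d ->]; exists (fun i => c i + d i).
by rewrite -big_split /=; apply: eq_bigr => i _; rewrite scalerDl.
Qed.

Lemma inKSpanZ gs a p : inKSpan gs p -> inKSpan gs (a *: p).
Proof.
move=> [c ->]; exists (fun i => a * c i).
by rewrite scaler_sumr; apply: eq_bigr => i _; rewrite scalerA.
Qed.

Lemma inKSpanB gs p q : inKSpan gs p -> inKSpan gs q -> inKSpan gs (p - q).
Proof. by move=> hp hq; rewrite -scaleN1r; apply/inKSpanD/inKSpanZ. Qed.

Lemma inKSpan_sum gs (I : Type) (r : seq I) (P : pred I) (F : I -> {mpoly K[n]}) :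
  (forall i, P i -> inKSpan gs (F i)) -> inKSpan gs (\sum_(i <- r | P i) F i).
Proof.
move=> spF; elim/big_rec: _ => [|i x Pi hx]; first exact: inKSpan0.
exact/inKSpanD/hx/spF.
Qed.

Lemma inKSpan_mem gs p : p \in gs -> inKSpan gs p.
Proof.
move=> pin; exists (fun i => (val i == index p gs)%:R).
have ilt : (index p gs < size gs)%N by rewrite index_mem.
rewrite (bigD1 (Ordinal ilt)) //= eqxx scale1r nth_index // big1 ?addr0 //.
by move=> i; rewrite -val_eqE /= => /negPf ->; rewrite scale0r.
Qed.

Lemma inKSpan_trans gs hs p :
  {in hs, forall h, inKSpan gs h} -> inKSpan hs p -> inKSpan gs p.
Proof.
move=> sp_hs [c ->]; apply: inKSpan_sum => i _; apply/inKSpanZ/sp_hs.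
exact: mem_nth.
Qed.

Lemma inKSpan_cons gs g p : inKSpan gs p -> inKSpan (g :: gs) p.
Proof. by apply: inKSpan_trans => h hgs; apply: inKSpan_mem; rewrite inE hgs orbT. Qed.

Lemma inKSpan_inIdeal gs p : inKSpan gs p -> inIdeal gs p.
Proof.
case=> c ->; exists (fun j => (c j)%:MP).
by apply: eq_bigr => j _; rewrite mul_mpolyC.
Qed.

End KSpan.

(** * Orders on terms *)

Section LexOrder.
Variable n : nat.
Implicit Types (t m : 'X_{1..n}).

Lemma lexLtP m1 m2 : reflect (exists k : 'I_n,
   (forall i : 'I_n, (i < k)%N -> m1 i = m2 i) /\ (m1 k < m2 k)%N) (lexLt m1 m2).
Proof.
apply: (iffP existsP) => [[k /andP [/forallP eq_lt lt_k]]|[k [eq_lt lt_k]]].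
  by exists k; split=> // i ik; move: (eq_lt i); rewrite ik => /eqP.
exists k; rewrite lt_k andbT; apply/forallP => i; apply/implyP => ik.
by rewrite eq_lt.
Qed.

Lemma lexLt_irr m : lexLt m m = false.
Proof. by apply/lexLtP => -[k [_]]; rewrite ltnn. Qed.

Lemma lexLt_trans m1 m2 m3 : lexLt m1 m2 -> lexLt m2 m3 -> lexLt m1 m3.
Proof.
move=> /lexLtP [k1 [h1 l1]] /lexLtP [k2 [h2 l2]]; apply/lexLtP.
case: (ltngtP k1 k2) => [lt|lt|/val_inj eq].
- exists k1; split; first by move=> i ik; rewrite h1 // h2 // (ltn_trans ik).
  by rewrite -(h2 k1 lt).
- exists k2; split; first by move=> i ik; rewrite h1 ?h2 // (ltn_trans ik).
  by rewrite (h1 k2 lt).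
- subst k2; exists k1; split; first by move=> i ik; rewrite h1 ?h2.
  exact: ltn_trans l2.
Qed.

Lemma lexLt_total m1 m2 : m1 != m2 -> lexLt m1 m2 || lexLt m2 m1.
Proof.
move=> ne.
have [k0 k0ne] : exists k, m1 k != m2 k.
  apply/existsP; apply: contraR ne => /existsPn eqm; apply/eqP/mnmP => i.
  by move: (eqm i); rewrite negbK => /eqP.
case: (@arg_minnP _ k0 (fun k => m1 k != m2 k) val k0ne) => k kne kmin.
have eq_lt (i : 'I_n) : (i < k)%N -> m1 i = m2 i.
  by move=> ik; apply/eqP; apply: contraTT ik => ine; rewrite -leqNgt kmin.
case: (ltngtP (m1 k) (m2 k)) => [lt|lt|eq]; last by rewrite eq eqxx in kne.
  by apply/orP; left; apply/lexLtP; exists k.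
by apply/orP; right; apply/lexLtP; exists k; split=> // i /eq_lt.
Qed.

Lemma lexLtD2l t m1 m2 : lexLt (t + m1)%MM (t + m2)%MM = lexLt m1 m2.
Proof.
apply: eq_existsb => k; congr (_ && _); last by rewrite !mnmDE ltn_add2l.
by apply: eq_forallb => i; rewrite !mnmDE eqn_add2l.
Qed.

Lemma lexLt0 t : lexLt t 0%MM = false.
Proof. by apply/lexLtP => -[k [_]]; rewrite mnm0E. Qed.

End LexOrder.

Section ColumnOrder.
Variables (n : nat) (Z : seq 'I_n).
Implicit Types (m : 'X_{1..n}).

Lemma zIndex_inj m1 m2 : (zIndex Z m1 < size Z)%N ->
  zIndex Z m1 = zIndex Z m2 -> m1 = m2.
Proof.
rewrite /zIndex -has_find => has1 e.
have [x0 _ _] := hasP has1.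
have has2 : has (fun z => m2 == U_(z)%MM) Z by rewrite has_find -e -has_find.
by move: (nth_find x0 has1) (nth_find x0 has2) => /eqP -> /eqP ->; rewrite e.
Qed.

Lemma colLt_irr m : colLt Z m m = false.
Proof. by rewrite /colLt ltnn lexLt_irr andbF if_same. Qed.

Lemma colLt_total m1 m2 : m1 != m2 -> colLt Z m1 m2 || colLt Z m2 m1.
Proof.
move=> ne; rewrite /colLt.
have l1 : (zIndex Z m1 <= size Z)%N := find_size _ _.
have l2 : (zIndex Z m2 <= size Z)%N := find_size _ _.
case: (ltnP (zIndex Z m1) (size Z)) => h1; case: (ltnP (zIndex Z m2) (size Z)) => h2.
- case: (ltngtP (zIndex Z m1) (zIndex Z m2)) => // e.
  by rewrite (zIndex_inj h1 e) eqxx in ne.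
- by rewrite (leq_trans h1 h2).
- by rewrite (leq_trans h2 h1) orbT.
- have -> : zIndex Z m1 = size Z by apply/eqP; rewrite eqn_leq l1.
  have -> : zIndex Z m2 = size Z by apply/eqP; rewrite eqn_leq l2.
  by rewrite eqxx orbC lexLt_total.
Qed.

Lemma colLt_trans m1 m2 m3 : colLt Z m1 m2 -> colLt Z m2 m3 -> colLt Z m1 m3.
Proof.
rewrite /colLt.
case: (ltnP (zIndex Z m1) (size Z)) => h1; case: (ltnP (zIndex Z m2) (size Z)) => h2.
- exact: ltn_trans.
- by move=> lt12 /andP [/eqP ->].
- by move=> /andP [/eqP e _]; rewrite e ltnn in h2.
- move=> /andP [_ lt21] /andP [/eqP -> lt32]; rewrite eqxx /=.
  exact: lexLt_trans lt32 lt21.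
Qed.

End ColumnOrder.

Section WeightedOrder.
Variables (n : nat) (W : 'I_n -> nat).
Implicit Types (t m : 'X_{1..n}).

Lemma wdeg0 : wdeg W 0%MM = 0%N.
Proof. by rewrite /wdeg big1 // => i _; rewrite mnm0E muln0. Qed.

Lemma wdegD t1 t2 : wdeg W (t1 + t2)%MM = (wdeg W t1 + wdeg W t2)%N.
Proof.
by rewrite /wdeg -big_split /=; apply: eq_bigr => i _; rewrite mnmDE mulnDr.
Qed.

Lemma wdeg1 z : wdeg W U_(z)%MM = W z.
Proof.
rewrite /wdeg (bigD1 z) //= mnm1E eqxx muln1 big1 ?addn0 // => i ne.
by rewrite mnm1E eq_sym (negPf ne) muln0.
Qed.

Lemma wdeg_le_mdeg d t : (forall k, W k <= d)%N -> (wdeg W t <= d * mdeg t)%N.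
Proof.
move=> Wle; rewrite /wdeg mdegE big_distrr /=; apply: leq_sum => i _.
by rewrite leq_mul2r Wle orbT.
Qed.

Lemma eq_wdeg W' t :
  (forall k, (0 < t k)%N -> W k = W' k) -> wdeg W t = wdeg W' t.
Proof.
move=> eqW; apply: eq_bigr => i _.
by case: (posnP (t i)) => [->|/eqW ->]; rewrite ?muln0.
Qed.

Definition wlexLe t1 t2 : bool :=
  (wdeg W t1 < wdeg W t2)%N ||
  ((wdeg W t1 == wdeg W t2) && ((t1 == t2) || lexLt t1 t2)).

Lemma wlexLe_termOrdering : termOrdering wlexLe.
Proof.
split; [split|split].
- by move=> t; rewrite /wlexLe !eqxx ltnn.
- move=> a b /andP []; rewrite /wlexLe.
  case: (ltngtP (wdeg W a) (wdeg W b)) => //= _.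
  case: eqP => // _; case: eqP => [->//|_] /= ab ba.
  by have := lexLt_trans ab ba; rewrite lexLt_irr.
- move=> b a c; rewrite /wlexLe.
  case: (ltngtP (wdeg W a) (wdeg W b)) => //= ab;
  case: (ltngtP (wdeg W b) (wdeg W c)) => //= bc.
  + by rewrite (ltn_trans ab bc).
  + by rewrite -bc ab.
  + by rewrite ab bc.
  + rewrite ab bc eqxx ltnn /= => /orP [/eqP -> //|lab] /orP [/eqP <-|lbc].
      by rewrite lab orbT.
    by rewrite (lexLt_trans lab lbc) orbT.
- move=> a b; rewrite /wlexLe.
  case: (ltngtP (wdeg W a) (wdeg W b)) => //= _.
  by case: (eqVneq a b) => [->|ne] //=; apply: lexLt_total.
- move=> t t1 t2; rewrite /wlexLe !wdegD ltn_add2l eqn_add2l lexLtD2l.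
  by rewrite eqm_add2l.
- move=> t; rewrite /wlexLe wdeg0; case: ltnP => //=; rewrite leqn0 eq_sym => ->.
  case: (eqVneq 0%MM t) => [//|ne] /=.
  by case/orP: (lexLt_total ne); rewrite ?lexLt0.
Qed.

Lemma wlexLe_compatible : compatible W wlexLe.
Proof.
by move=> t t' lt; rewrite /wlexLe lt /=; apply: contraTneq lt => ->; rewrite ltnn.
Qed.

End WeightedOrder.

(** * Reduced row echelon form *)

Section Echelon.
Variables (K : fieldType) (n : nat) (lt : rel 'X_{1..n}).
Hypothesis lt_irr : irreflexive lt.
Hypothesis lt_trans : forall a b c, lt a b -> lt b c -> lt a c.
Hypothesis lt_total : forall a b, a != b -> lt a b || lt b a.
Local Notation poly := {mpoly K[n]}.
Implicit Types (gs hs L : seq poly) (g h p q v : poly) (m : 'X_{1..n}).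

Definition isLeast h m : Prop :=
  m \in msupp h /\ forall m', m' \in msupp h -> m' != m -> lt m m'.

Lemma isLeastE h m : isLeast h m <->
  h@_m != 0 /\ forall m', h@_m' != 0 -> m' != m -> lt m m'.
Proof.
rewrite /isLeast mcoeff_msupp.
split=> -[nz least]; split=> // m'; first by rewrite -mcoeff_msupp; apply: least.
by rewrite mcoeff_msupp; apply: least.
Qed.

Lemma isLeast_inj h m1 m2 : isLeast h m1 -> isLeast h m2 -> m1 = m2.
Proof.
move=> [s1 least1] [s2 least2]; case: (eqVneq m2 m1) => // ne.
have lt21 : lt m2 m1 by apply: least2; rewrite // eq_sym.
by have := lt_trans (least1 _ s2 ne) lt21; rewrite lt_irr.
Qed.

Let lte a b := (a == b) || lt a b.

Let lte_total : total lte.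
Proof. by move=> a b; rewrite /lte [b == a]eq_sym; case: eqVneq => //= /lt_total. Qed.

Let lte_trans : transitive lte.
Proof.
move=> b a c /orP [/eqP -> //|ab] /orP [/eqP <-|bc]; first by rewrite /lte ab orbT.
by rewrite /lte (lt_trans ab bc) orbT.
Qed.

Definition pivot h : 'X_{1..n} := head 0%MM (sort lte (msupp h)).

Lemma pivotP h : h != 0 -> isLeast h (pivot h).
Proof.
move=> nz; rewrite /pivot.
have := sort_sorted lte_total (msupp h); have := mem_sort lte (msupp h).
have := size_sort lte (msupp h).
case: (sort lte (msupp h)) => [|a s] /= size_s mem_s sorted_s.
  by move: nz; rewrite -msupp_eq0 -size_eq0 -size_s.
split=> [|m' m'h m'a]; first by rewrite -mem_s mem_head.
have /allP /(_ m') := order_path_min lte_trans sorted_s.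
rewrite /lte eq_sym (negPf m'a) /=; apply.
by move: m'h; rewrite -mem_s inE (negPf m'a).
Qed.

Lemma pivot_eq h m : isLeast h m -> pivot h = m.
Proof.
move=> hm; apply: (isLeast_inj _ hm); apply: pivotP.
by case: hm => mh _; apply: contraTneq mh => ->; rewrite msupp0.
Qed.

Definition echelon hs (pv : 'I_(size hs) -> 'X_{1..n}) : Prop :=
  [/\ forall i : 'I_(size hs), isLeast hs`_i (pv i),
      forall i j : 'I_(size hs), (i < j)%N -> lt (pv i) (pv j),
      forall i : 'I_(size hs), hs`_i@_(pv i) = 1 &
      forall i j : 'I_(size hs), i != j -> hs`_j@_(pv i) = 0].
Arguments echelon : clear implicits.

Definition isRref gs hs : Prop :=
  [/\ all (fun h => h != 0) hs, {in hs, forall h, inKSpan gs h},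
      {in gs, forall g, inKSpan hs g} & exists pv, echelon hs pv].

Section EchelonBasis.
Variables (hs : seq poly) (pv : 'I_(size hs) -> 'X_{1..n}).
Hypothesis hs_echelon : echelon hs pv.

Lemma echelon_pivotE i : pv i = pivot hs`_i.
Proof. by case: hs_echelon => least _ _ _; rewrite (pivot_eq (least i)). Qed.

Lemma echelon_expand v : inKSpan hs v -> v = \sum_i v@_(pv i) *: hs`_i.
Proof.
case: hs_echelon => _ _ one zero [c ->]; apply: eq_bigr => j _; congr (_ *: _).
rewrite mcoeff_sum (bigD1 j) //= mcoeffZ one mulr1 big1 ?addr0 // => i ij.
by rewrite mcoeffZ zero ?mulr0 // eq_sym.
Qed.

(* The least term of v is the pivot of the first basis vector on which v has
   a nonzero coordinate. *)
Lemma echelon_isLeast v : inKSpan hs v -> v != 0 -> exists j, isLeast v (pv j).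
Proof.
move=> vs nz; have ev := echelon_expand vs.
case: hs_echelon => least incr _ _.
have [j0 j0n] : exists j, v@_(pv j) != 0.
  apply/existsP; apply: contraNT nz => /existsPn vpv0; rewrite ev big1 // => i _.
  by move: (vpv0 i); rewrite negbK => /eqP ->; rewrite scale0r.
case: (@arg_minnP _ j0 (fun j => v@_(pv j) != 0) val j0n) => j jn jmin.
exists j; apply/isLeastE; split=> // m' m'n m'ne.
have [i /andP [ci hi]] : exists i, (v@_(pv i) != 0) && (hs`_i@_m' != 0).
  apply/existsP; apply: contraNT m'n => /existsPn none.
  rewrite ev mcoeff_sum big1 // => i _; rewrite mcoeffZ.
  by move: (none i); rewrite negb_and !negbK => /orP [] /eqP ->; rewrite ?mul0r ?mulr0.
have ji := jmin i ci; have /isLeastE [_ least_i] := least i.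
have lt_ji : (j < i)%N \/ j = i.
  by case: (ltngtP j i) => [|l|/val_inj]; [left | rewrite ltnNge ji in l | right].
case: (eqVneq m' (pv i)) m'ne => [->|ne] m'ne.
  by case: lt_ji => [/incr //|eji]; rewrite eji eqxx in m'ne.
case: lt_ji => [/incr lji|->]; last exact: least_i _ hi ne.
exact: lt_trans lji (least_i _ hi ne).
Qed.

Lemma echelon_sorted : sorted lt (map pivot hs).
Proof.
have lt_tr : transitive lt by move=> b a c; apply: lt_trans.
rewrite sorted_pairwise //; apply/(pairwiseP 0%MM) => i j.
rewrite !inE size_map => hi hj ij; rewrite !(nth_map 0) //.
have [_ incr _ _] := hs_echelon.
by have := incr (Ordinal hi) (Ordinal hj) ij; rewrite !echelon_pivotE.
Qed.

End EchelonBasis.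

Lemma rref_pivot_sub gs hs1 hs2 : isRref gs hs1 -> isRref gs hs2 ->
  {subset map pivot hs2 <= map pivot hs1}.
Proof.
move=> [_ _ sp_gs1 [pv1 ech1]] [nz2 sp2 _ _] _ /mapP [h h2 ->].
have h_nz : h != 0 by apply: (allP nz2).
have [j hj] := echelon_isLeast ech1 (inKSpan_trans sp_gs1 (sp2 h h2)) h_nz.
by rewrite (pivot_eq hj) (echelon_pivotE ech1) map_f ?mem_nth.
Qed.

Lemma rref_uniq gs hs1 hs2 : isRref gs hs1 -> isRref gs hs2 -> hs1 = hs2.
Proof.
move=> rref1 rref2.
have lt_tr : transitive lt by move=> b a c; apply: lt_trans.
have [_ _ sp_gs1 [pv1 ech1]] := rref1; have [_ sp2 _ [pv2 ech2]] := rref2.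
have piv_eq : map pivot hs1 = map pivot hs2.
  apply: (irr_sorted_eq lt_tr lt_irr (echelon_sorted ech1) (echelon_sorted ech2)).
  move=> x; apply/idP/idP; first exact: (rref_pivot_sub rref2 rref1).
  exact: (rref_pivot_sub rref1 rref2).
have size_eq : size hs1 = size hs2 by rewrite -(size_map pivot) piv_eq size_map.
have pv1E (j : 'I_(size hs1)) (j2 : (j < size hs2)%N) : pv1 j = pv2 (Ordinal j2).
  rewrite !echelon_pivotE //= -(nth_map 0 0%MM) ?piv_eq ?(nth_map 0) //.
have [_ _ one2 zero2] := ech2.
apply: (eq_from_nth (x0 := 0)) => // i hi.
have hi2 : (i < size hs2)%N by rewrite -size_eq.
rewrite [RHS](echelon_expand ech1 (inKSpan_trans sp_gs1 (sp2 _ (mem_nth 0 hi2)))).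
rewrite (bigD1 (Ordinal hi)) //= big1 ?addr0 => [|j ji].
  by rewrite (pv1E (Ordinal hi) hi2) one2 scale1r.
have j2 : (j < size hs2)%N by rewrite -size_eq.
by rewrite (pv1E _ j2) (zero2 (Ordinal j2) (Ordinal hi2)) ?scale0r.
Qed.

Lemma pivotZ a h : a != 0 -> pivot (a *: h) = pivot h.
Proof.
move=> a_nz; case: (eqVneq h 0) => [->|nz]; first by rewrite scaler0.
have [p_in least] := pivotP nz; apply: pivot_eq.
by split=> [|m']; rewrite (perm_mem (msuppZ _ a_nz)) //; apply: least.
Qed.

(* An echelon basis up to the order of its elements. *)
Definition reduced L : Prop :=
  [/\ all (fun h => h != 0) L, {in L, forall h, h@_(pivot h) = 1} &
      {in L &, forall h h', h != h' -> h'@_(pivot h) = 0}].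

Definition reduceBy q h := h - h@_(pivot q) *: q.

Lemma isLeast_reduceBy q h : h != 0 -> q != 0 -> q@_(pivot h) = 0 ->
  isLeast (reduceBy q h) (pivot h).
Proof.
move=> h_nz q_nz q0.
have /isLeastE [hp h_least] := pivotP h_nz.
have /isLeastE [qp q_least] := pivotP q_nz.
apply/isLeastE; split; first by rewrite mcoeffB mcoeffZ q0 mulr0 subr0.
move=> m' m'_nz m'_ne; case: (eqVneq h@_m' 0) => hm'; last exact: h_least.
move: m'_nz; rewrite mcoeffB mcoeffZ hm' sub0r oppr_eq0 mulf_eq0 negb_or.
case/andP=> hq qm'.
have lt_hq : lt (pivot h) (pivot q).
  by apply: h_least hq _; apply/eqP => e; move: qp; rewrite e q0 eqxx.
case: (eqVneq m' (pivot q)) => [-> //|m'q].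
exact: lt_trans lt_hq (q_least _ qm' m'q).
Qed.

Lemma reduced_adjoin L q : reduced L -> q@_(pivot q) = 1 ->
  {in L, forall h, q@_(pivot h) = 0} -> reduced (q :: map (reduceBy q) L).
Proof.
move=> [nzL oneL zeroL] q1 q0.
have q_nz : q != 0.
  by apply/eqP => qz; move: q1; rewrite qz mcoeff0 => /eqP; rewrite eq_sym oner_eq0.
have least_red h : h \in L -> isLeast (reduceBy q h) (pivot h).
  by move=> hL; apply: isLeast_reduceBy (q0 h hL); [apply: (allP nzL)|].
have pivot_red h : h \in L -> pivot (reduceBy q h) = pivot h.
  by move/least_red/pivot_eq.
have red_q h : (reduceBy q h)@_(pivot q) = 0.
  by rewrite mcoeffB mcoeffZ q1 mulr1 subrr.
have red_h h h' : h \in L -> (reduceBy q h')@_(pivot h) = h'@_(pivot h).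
  by move=> hL; rewrite mcoeffB mcoeffZ q0 // mulr0 subr0.
split.
- rewrite /= q_nz; apply/allP => _ /mapP [h /least_red [red_in _] ->].
  by apply: contraTneq red_in => ->; rewrite msupp0.
- by move=> _ /predU1P [-> //|/mapP [h hL ->]]; rewrite pivot_red // red_h // oneL.
- move=> x y /predU1P [->|/mapP [h hL ->]] /predU1P [->|/mapP [k kL ->]] ne.
  + by rewrite eqxx in ne.
  + exact: red_q.
  + by rewrite pivot_red // q0.
  + rewrite pivot_red // red_h // zeroL //.
    by apply: contraNneq ne => ->.
Qed.

Lemma reduced_remainder L g : reduced L ->
  exists2 g', {in L, forall h, g'@_(pivot h) = 0} & inKSpan L (g - g').
Proof.
case=> _ oneL zeroL.
exists (g - \sum_(h <- undup L) g@_(pivot h) *: h); last first.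
  rewrite subKr big_seq; apply: inKSpan_sum => h; rewrite mem_undup => hL.
  exact/inKSpanZ/inKSpan_mem.
move=> h0 h0L; rewrite mcoeffB mcoeff_sum (bigD1_seq h0) ?mem_undup ?undup_uniq //=.
rewrite mcoeffZ oneL // mulr1 big1_seq => [|h /andP [ne hL]].
  by rewrite addr0 subrr.
by rewrite mem_undup in hL; rewrite mcoeffZ (zeroL h0 h) ?mulr0 // eq_sym.
Qed.

Lemma reduced_extend L g : reduced L -> exists L', [/\ reduced L',
  {in L', forall h, inKSpan (g :: L) h} & {in g :: L, forall h, inKSpan L' h}].
Proof.
move=> redL; have [g' g'0 sp_gg'] := reduced_remainder g redL.
have sp_g' : inKSpan (g :: L) g'.
  rewrite -(subKr g g'); apply: inKSpanB; last exact: inKSpan_cons.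
  exact/inKSpan_mem/mem_head.
have sp_L p : p \in L -> inKSpan (g :: L) p.
  by move=> pL; apply: inKSpan_mem; rewrite inE pL orbT.
case: (eqVneq g' 0) => [g'_eq0|g'_nz].
  exists L; split=> // _ /predU1P [->|/inKSpan_mem //].
  by rewrite g'_eq0 subr0 in sp_gg'.
(* otherwise the normalised remainder is a new row, with a new pivot *)
set c := g'@_(pivot g'); set q := c^-1 *: g'.
have c_nz : c != 0 by have [] := (isLeastE _ _).1 (pivotP g'_nz).
have pivot_q : pivot q = pivot g' by rewrite pivotZ ?invr_eq0.
have q1 : q@_(pivot q) = 1 by rewrite pivot_q mcoeffZ mulVf.
have q0 : {in L, forall h, q@_(pivot h) = 0}.
  by move=> h hL; rewrite mcoeffZ g'0 ?mulr0.
exists (q :: map (reduceBy q) L); split; first exact: reduced_adjoin.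
  move=> _ /predU1P [->|/mapP [h hL ->]]; first exact: inKSpanZ.
  by apply: inKSpanB; [apply: sp_L | apply: inKSpanZ; apply: inKSpanZ].
have sp_q : inKSpan (q :: map (reduceBy q) L) q by apply/inKSpan_mem/mem_head.
have sp_red h : h \in L -> inKSpan (q :: map (reduceBy q) L) h.
  move=> hL; rewrite -(subrK (h@_(pivot q) *: q) h).
  apply: inKSpanD (inKSpanZ _ sp_q).
  exact/inKSpan_cons/inKSpan_mem/(map_f (reduceBy q)).
move=> _ /predU1P [->|/sp_red //].
have g'_q : g' = c *: q by rewrite /q scalerA divff // scale1r.
rewrite -(subrK g' g); apply: inKSpanD; first exact: (inKSpan_trans sp_red sp_gg').
by rewrite g'_q; apply: inKSpanZ.
Qed.

Lemma reduced_exists gs : exists L, [/\ reduced L,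
  {in L, forall h, inKSpan gs h} & {in gs, forall g, inKSpan L g}].
Proof.
elim: gs => [|g gs [L [redL sp_L sp_gs]]]; first by exists [::]; split; first split.
have [L' [redL' sp_L' sp_gL]] := reduced_extend g redL.
exists L'; split=> // [h /sp_L'|x /predU1P [->|/sp_gs]].
- apply: inKSpan_trans => y /predU1P [->|/sp_L]; last exact: inKSpan_cons.
  exact/inKSpan_mem/mem_head.
- exact/sp_gL/mem_head.
- by apply: inKSpan_trans => h hL; apply: sp_gL; rewrite inE hL orbT.
Qed.

Lemma reduced_pivot_inj L : reduced L -> {in L &, injective pivot}.
Proof.
case=> _ oneL zeroL h k hL kL e; apply/eqP; apply: contraT => ne.
by have := zeroL h k hL kL ne; rewrite e oneL // => /eqP; rewrite oner_eq0.
Qed.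

Lemma rref_exists gs : exists hs, isRref gs hs.
Proof.
have [L [redL sp_L sp_gs]] := reduced_exists gs.
have [nzL oneL zeroL] := redL.
pose le a b := lte (pivot a) (pivot b).
have le_total : total le by move=> a b; apply: lte_total.
have le_trans : transitive le by move=> b a c; apply: lte_trans.
pose hs := sort le (undup L).
have mem_hs x : (x \in hs) = (x \in L) by rewrite mem_sort mem_undup.
have hs_uniq : uniq hs by rewrite sort_uniq undup_uniq.
have hsL (i : 'I_(size hs)) : hs`_i \in L by rewrite -mem_hs mem_nth.
exists hs; split.
- by apply/allP => x; rewrite mem_hs; apply: (allP nzL).
- by move=> h; rewrite mem_hs; apply: sp_L.
- move=> g /sp_gs; apply: inKSpan_trans => h hL.
  by apply: inKSpan_mem; rewrite mem_hs.
exists (fun i => pivot hs`_i); split=> [i|i j ij|i|i j ij].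
- exact/pivotP/(allP nzL)/hsL.
- have hs_sorted : sorted le hs := sort_sorted le_total (undup L).
  have := sorted_ltn_nth le_trans 0 hs_sorted i j (ltn_ord i) (ltn_ord j) ij.
  case/orP=> [/eqP e|//]; have := nth_uniq 0 (ltn_ord i) (ltn_ord j) hs_uniq.
  by rewrite (reduced_pivot_inj redL (hsL i) (hsL j) e) eqxx ltn_eqF.
- exact/oneL/hsL.
- by apply: zeroL; rewrite ?hsL // nth_uniq.
Qed.

End Echelon.

(** * The procedure CHECK *)

Section LinearInterreduction.
Variables (K : fieldType) (n : nat) (Z : seq 'I_n).
Implicit Types (gs hs : seq {mpoly K[n]}).

(* [isLI Z] is [isRref (colLt Z)] unfolded. *)
Lemma LI_exists gs : exists hs, isLI Z gs hs.
Proof. exact: (rref_exists (@colLt_irr n Z) (@colLt_trans n Z) (@colLt_total n Z)). Qed.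

Lemma LI_uniq gs hs1 hs2 : isLI Z gs hs1 -> isLI Z gs hs2 -> hs1 = hs2.
Proof. exact: (rref_uniq (@colLt_irr n Z) (@colLt_trans n Z) (@colLt_total n Z)). Qed.

End LinearInterreduction.

Section CheckLoop.
Variables (K : fieldType) (n : nat) (delta : nat).
Implicit Types (L hs : seq {mpoly K[n]}) (Zc : seq 'I_n) (w : 'I_n -> nat).

Lemma checkLoop_inv L Zc w d r : checkLoop delta L Zc w d r ->
  exists2 hs, isLI Zc L hs &
   let Zt := Ztilde Zc hs in let Zr := [seq z <- Zc | z \notin Zt] in
   let w' := fun k => if k \in Zt then d else w k in
   [\/ Zt = [::] /\ r = None,
       [/\ Zt != [::], Zr = [::] & r = Some w'] |
       [/\ Zt != [::], Zr != [::] &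
           checkLoop delta (map (restrictZ Zr) hs) Zr w' (delta * d + 1) r]].
Proof.
case=> {L Zc w d r} L Zc w d hs ? *; exists hs => //.
- exact: Or31.
- exact: Or32.
- exact: Or33.
Qed.

Lemma checkLoop_det L Zc w d r1 r2 :
  checkLoop delta L Zc w d r1 -> checkLoop delta L Zc w d r2 -> r1 = r2.
Proof.
move=> H; elim: H r2 => {L Zc w d r1} L Zc w d hs.
- move=> LI1 Zt0 r2 /checkLoop_inv [hs' /(LI_uniq LI1) <-] /=.
  by case=> [[_ ->]|[Zt_nz _ _]|[Zt_nz _ _]] //; rewrite Zt0 in Zt_nz.
- move=> LI1 Zt_nz Zr0 r2 /checkLoop_inv [hs' /(LI_uniq LI1) <-] /=.
  case=> [[Zt0 _]|[_ _ -> //]|[_ Zr_nz _]]; first by rewrite Zt0 in Zt_nz.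
  by rewrite Zr0 in Zr_nz.
- move=> r LI1 Zt_nz Zr_nz _ IH r2 /checkLoop_inv [hs' /(LI_uniq LI1) <-] /=.
  case=> [[Zt0 _]|[_ Zr0 _]|[_ _ /IH //]]; first by rewrite Zt0 in Zt_nz.
  by rewrite Zr0 in Zr_nz.
Qed.

Lemma size_filter_notin_lt (T : eqType) (s t : seq T) :
  t != [::] -> {subset t <= s} -> (size [seq x <- s | x \notin t] < size s)%N.
Proof.
case: t => [//|z t] _ sub.
rewrite size_filter -[X in (_ < X)%N](count_predC (fun x => x \notin z :: t) s).
rewrite -addn1 leq_add2l -has_count; apply/hasP; exists z.
  by apply: sub; rewrite mem_head.
by rewrite /= negbK mem_head.
Qed.

Lemma Ztilde_sub Zc hs : {subset Ztilde Zc hs <= Zc}.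
Proof. by move=> z; rewrite mem_filter => /andP []. Qed.

Lemma Ztilde_update_out Zc hs (d : nat) w k : k \notin Zc ->
  (if k \in Ztilde Zc hs then d else w k) = w k.
Proof. by move=> kZ; case: ifP => // /Ztilde_sub kZ'; rewrite kZ' in kZ. Qed.

Lemma Ztilde_var Zc hs z : z \in Ztilde Zc hs -> 'X_z \in hs.
Proof. by rewrite mem_filter => /andP []. Qed.

Lemma checkLoop_exists L Zc w d : exists res, checkLoop delta L Zc w d res.
Proof.
move: {2}(size Zc) (leqnn (size Zc)) => k.
elim: k L Zc w d => [|k IH] L Zc w d hk.
  have [hs LI] := LI_exists Zc L.
  by exists None; apply: (loop_fail _ _ _ LI); move: hk; rewrite leqn0 => /nilP ->.
have [hs LI] := LI_exists Zc L.
case: (eqVneq (Ztilde Zc hs) [::]) => Zt0.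
  by exists None; apply: loop_fail LI Zt0.
case: (eqVneq [seq z <- Zc | z \notin Ztilde Zc hs] [::]) => Zr0.
  by eexists; apply: loop_stop LI Zt0 Zr0.
have [|res H] := IH (map (restrictZ [seq z <- Zc | z \notin Ztilde Zc hs]) hs)
  [seq z <- Zc | z \notin Ztilde Zc hs]
  (fun k => if k \in Ztilde Zc hs then d else w k) (delta * d + 1)%N.
  exact: leq_trans (size_filter_notin_lt Zt0 (@Ztilde_sub Zc hs)) hk.
by exists res; apply: loop_next LI Zt0 Zr0 H.
Qed.

End CheckLoop.

Lemma mcoeff_restrictZ (K : fieldType) n (Z : seq 'I_n) (p : {mpoly K[n]}) m :
  (restrictZ Z p)@_m = if has (fun z => (0 < m z)%N) Z then p@_m else 0.
Proof.
rewrite /restrictZ mcoeff_sum (eq_bigr (fun m' => p@_m' * (m' == m)%:R)); last first.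
  by move=> m' _; rewrite mcoeffZ mcoeffX.
case: (boolP (m \in msupp p)) => mp.
  rewrite big_mkcond (bigD1_seq m) ?msupp_uniq //= eqxx mulr1 big1_seq ?addr0.
    by case: ifP.
  by move=> m' /andP [ne _]; case: ifP => // _; rewrite (negPf ne) mulr0.
have -> : p@_m = 0 by apply/eqP; rewrite mcoeff_eq0.
rewrite big1_seq; first by case: ifP.
move=> m' /andP [_ m'p]; case: (eqVneq m' m) => [e|_]; last by rewrite mulr0.
by rewrite -e m'p in mp.
Qed.

Section CheckCorrect.
Variables (K : fieldType) (n : nat) (gs : seq {mpoly K[n]}).
Local Notation poly := {mpoly K[n]}.
Local Notation delta := (\max_(g <- gs) tdeg g)%N.
Implicit Types (L hs : seq poly) (f h : poly) (Zc : seq 'I_n) (w : 'I_n -> nat).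

Definition lifts Zc w d f h : Prop :=
  [/\ inKSpan gs f, forall m, (delta < mdeg m)%N -> f@_m = 0 &
      forall m, (f - h)@_m != 0 ->
        (wdeg w m < d)%N && all (fun k => m k == 0)%N Zc].

Lemma lifts_lincomb Zc w d N (c : 'I_N -> K) (F H : 'I_N -> poly) :
  (forall i, lifts Zc w d (F i) (H i)) ->
  lifts Zc w d (\sum_i c i *: F i) (\sum_i c i *: H i).
Proof.
move=> liftsF; split.
- by apply: inKSpan_sum => i _; apply: inKSpanZ; case: (liftsF i).
- move=> m hm; rewrite mcoeff_sum big1 // => i _; rewrite mcoeffZ.
  by case: (liftsF i) => _ F0 _; rewrite F0 ?mulr0.
- move=> m; rewrite -sumrB mcoeff_sum => nz.
  have [i ni] : exists i, (c i *: F i - c i *: H i)@_m != 0.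
    apply/existsP; apply: contraNT nz => /existsPn none; rewrite big1 // => i _.
    by move: (none i); rewrite negbK => /eqP.
  case: (liftsF i) => _ _; apply.
  by move: ni; rewrite -scalerBr mcoeffZ mulf_eq0 negb_or => /andP [].
Qed.

Definition loopInv L Zc w d : Prop :=
  (forall k, w k <= d)%N /\ {in L, forall h, exists f, lifts Zc w d f h}.

Lemma loopInv_LI L Zc w d hs : loopInv L Zc w d -> isLI Zc L hs ->
  {in hs, forall h, exists f, lifts Zc w d f h}.
Proof.
move=> [_ liftsL] [_ sp _ _] h /sp [c ->].
have [F liftsF] : exists F : 'I_(size L) -> poly, forall i, lifts Zc w d (F i) L`_i.
  exact: (fin_all_exists (fun i : 'I_(size L) => liftsL _ (mem_nth 0 (ltn_ord i)))).
by exists (\sum_i c i *: F i); apply: lifts_lincomb.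
Qed.

Lemma lifts_restrict Zc w d f h (Zt : seq 'I_n) :
  (0 < delta)%N -> {subset Zt <= Zc} -> (forall k, w k <= d)%N ->
  lifts Zc w d f h ->
  lifts [seq z <- Zc | z \notin Zt] (fun k => if k \in Zt then d else w k)
        (delta * d + 1) f (restrictZ [seq z <- Zc | z \notin Zt] h).
Proof.
move=> delta_gt0 sub w_le [sp f_deg f_h]; split=> // m.
have d_le : (d <= delta * d + 1)%N by rewrite addn1 ltnW // ltnS leq_pmull.
rewrite mcoeffB mcoeff_restrictZ; case: ifP => has_m.
  rewrite -mcoeffB => /f_h /andP [lt /allP m0].
  apply/andP; split.
    rewrite (@eq_wdeg _ _ w); first exact: leq_trans lt d_le.
    move=> k mk; case: ifP => // kt.
    by move/eqP: (m0 k (sub k kt)) mk => ->.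
  by apply/allP => k; rewrite mem_filter => /andP [_ /m0].
rewrite subr0 => fm; apply/andP; split.
  have mdeg_le : (mdeg m <= delta)%N.
    by rewrite leqNgt; apply: contra fm => /f_deg ->.
  apply: leq_ltn_trans (@wdeg_le_mdeg _ _ d m _) _; first by move=> k; case: ifP.
  by rewrite addn1 ltnS mulnC leq_mul2r mdeg_le orbT.
by apply/allP => k kin; move/hasPn: has_m => /(_ k kin); rewrite lt0n negbK.
Qed.

Lemma lifts_var_coef Zc w d f z : lifts Zc w d f 'X_z -> z \in Zc ->
  f@_U_(z) = 1.
Proof.
case=> _ _ f_h zZ.
have : (f - 'X_z)@_U_(z) = 0.
  by apply/eqP; apply: contraT => /f_h /andP [_ /allP /(_ z zZ)]; rewrite mnm1E eqxx.
by rewrite mcoeffB mcoeffX eqxx => /eqP; rewrite subr_eq0 => /eqP.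
Qed.

Lemma lifts_var_delta_gt0 Zc w d f z : lifts Zc w d f 'X_z -> z \in Zc ->
  (0 < delta)%N.
Proof.
move=> lifts_f zZ; have f1 := lifts_var_coef lifts_f zZ.
case: lifts_f => _ f_deg _; rewrite lt0n; apply: contra_eqN f1 => /eqP d0.
by rewrite f_deg ?mdeg1 ?d0 // eq_sym oner_eq0.
Qed.

Definition wSeparable W z : Prop :=
  exists f, [/\ inKSpan gs f, U_(z)%MM \in msupp f &
    forall m, m \in msupp f -> m != U_(z)%MM -> (wdeg W m < wdeg W U_(z))%N].

Lemma lifts_wSeparable Zc w d f z W : lifts Zc w d f 'X_z -> z \in Zc ->
  (forall k, k \notin Zc -> W k = w k) -> W z = d -> wSeparable W z.
Proof.
move=> lifts_f zZ Ww Wz; have f1 := lifts_var_coef lifts_f zZ.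
case: lifts_f => sp _ f_h; exists f; split=> // [|m].
  by rewrite mcoeff_msupp f1 oner_neq0.
rewrite mcoeff_msupp => fm ne.
have : (f - 'X_z)@_m != 0.
  by rewrite mcoeffB mcoeffX [U_(z)%MM == _]eq_sym (negPf ne) subr0.
move=> /f_h /andP [lt /allP m0]; rewrite wdeg1 Wz (@eq_wdeg _ _ w) // => k mk.
by apply: Ww; apply: contraL mk => /m0 /eqP ->.
Qed.

Lemma loopInv_next L Zc w d hs : loopInv L Zc w d -> isLI Zc L hs ->
  Ztilde Zc hs != [::] ->
  let Zr := [seq z <- Zc | z \notin Ztilde Zc hs] in
  loopInv (map (restrictZ Zr) hs) Zr
    (fun k => if k \in Ztilde Zc hs then d else w k) (delta * d + 1).
Proof.
move=> inv LI Zt_nz Zr; have liftsL := loopInv_LI inv LI.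
have [z0 z0t] : exists z, z \in Ztilde Zc hs.
  by case: (Ztilde Zc hs) Zt_nz => [//|z0 s0] _; exists z0; rewrite mem_head.
have [f0 lifts_f0] := liftsL 'X_z0 (Ztilde_var z0t).
have delta_gt0 := lifts_var_delta_gt0 lifts_f0 (Ztilde_sub z0t).
have [w_le _] := inv.
have d_le : (d <= delta * d + 1)%N by rewrite addn1 ltnW // ltnS leq_pmull.
split=> [k|_ /mapP [h /liftsL [f lifts_f] ->]].
  by case: ifP => _ //; apply: leq_trans (w_le k) d_le.
by exists f; apply: lifts_restrict delta_gt0 (@Ztilde_sub _ _ Zc hs) w_le lifts_f.
Qed.

Lemma checkLoop_correct L Zc w d res : checkLoop delta L Zc w d res ->
  forall W, res = Some W -> loopInv L Zc w d ->
  (forall k, k \notin Zc -> W k = w k) /\ {in Zc, forall z, wSeparable W z}.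
Proof.
elim=> {L Zc w d res} // L Zc w d hs.
- move=> LI Zt_nz Zr0 W [<-] inv; split=> [k /(Ztilde_update_out hs d w) //|z zZ].
  have zt : z \in Ztilde Zc hs.
    apply: contraT => zt.
    by have := mem_filter (fun z => z \notin Ztilde Zc hs) z Zc; rewrite Zr0 zt zZ.
  have [f lifts_f] := loopInv_LI inv LI (Ztilde_var zt).
  by apply: lifts_wSeparable lifts_f zZ (Ztilde_update_out hs d w) _; rewrite zt.
- move=> res LI Zt_nz Zr_nz _ IH W eW inv.
  have [W_out W_sep] := IH W eW (loopInv_next inv LI Zt_nz).
  have W_out' k : k \notin Zc -> W k = w k.
    by move=> kZ; rewrite W_out ?mem_filter ?(negPf kZ) ?andbF ?Ztilde_update_out.
  split=> // z zZ; case: (boolP (z \in Ztilde Zc hs)) => zt.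
    have [f lifts_f] := loopInv_LI inv LI (Ztilde_var zt).
    apply: lifts_wSeparable lifts_f zZ W_out' _.
    by rewrite W_out /= ?zt // mem_filter zt.
  by apply: W_sep; rewrite mem_filter zt zZ.
Qed.

Lemma loopInv_init Z : loopInv (map (restrictZ Z) gs) Z (fun=> 0%N) 1.
Proof.
split=> // _ /mapP [g g_in ->]; exists g; split=> [|m|m]; first exact: inKSpan_mem.
  move=> deg_m; apply/eqP; rewrite mcoeff_eq0; apply: contraTN deg_m => mg.
  rewrite -leqNgt; apply: (@leq_trans (tdeg g)).
    exact: (leq_bigmax_seq (F := fun m : 'X_{1..n} => mdeg m) m mg).
  exact: (leq_bigmax_seq (F := fun g => tdeg g) g g_in).
rewrite mcoeffB mcoeff_restrictZ.
case: ifP => [_|/hasPn Z0 _]; first by rewrite subrr eqxx.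
rewrite /wdeg big1 => [|i _]; last by rewrite mul0n.
by apply/allP => k /Z0; rewrite lt0n negbK.
Qed.

End CheckCorrect.

Section CheckProcedure.
Variables (K : fieldType) (n : nat) (gs : seq {mpoly K[n]}) (Z : seq 'I_n).

Lemma CHECK_exists : exists res, CHECK gs Z res.
Proof.
case: (leqP (size Z) (\rank (linMx (map (restrictZ Z) gs)))) => rk.
  have [res H] := checkLoop_exists (\max_(g <- gs) tdeg g)%N
    (map (restrictZ Z) gs) Z (fun=> 0%N) 1.
  by exists res; apply: check_loop.
by exists None; apply: check_rank_fail.
Qed.

Lemma CHECK_det res1 res2 : CHECK gs Z res1 -> CHECK gs Z res2 -> res1 = res2.
Proof.
case=> [rk1|r1 rk1 H1] [rk2|r2 rk2 H2] //.
- by rewrite ltnNge rk2 in rk1.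
- by rewrite ltnNge rk1 in rk2.
- exact: checkLoop_det H1 H2.
Qed.

Lemma CHECK_correct W : CHECK gs Z (Some W) -> {in Z, forall z, wSeparable gs W z}.
Proof.
move E : (Some W) => res H; case: H E => // r _ H eW.
by have [] := checkLoop_correct H (esym eW) (loopInv_init gs Z).
Qed.

End CheckProcedure.

Lemma compatible_LTis (K : fieldType) n (W : 'I_n -> nat) le (f : {mpoly K[n]}) t :
  termOrdering le -> compatible W le -> t \in msupp f ->
  (forall m, m \in msupp f -> m != t -> (wdeg W m < wdeg W t)%N) -> LTis le f t.
Proof.
move=> [[le_refl _ _ _] _] comp tf below; split=> // m mf.
case: (eqVneq m t) => [->|ne]; first exact: le_refl.
by case/andP: (comp _ _ (below m mf ne)).
Qed.

Theorem mainTheorem2 (K : fieldType) (n : nat) (gs : seq {mpoly K[n]})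
    (s : nat) (Z : s.-tuple 'I_n) (uniqZ : uniq Z) :
  (exists res, CHECK gs Z res) /\
  (forall res1 res2, CHECK gs Z res1 -> CHECK gs Z res2 -> res1 = res2) /\
  (forall W : 'I_n -> nat, CHECK gs Z (Some W) ->
     exists f : 'I_s -> {mpoly K[n]},
       (forall i, inKSpan gs (f i)) /\
       (forall le : rel 'X_{1..n}, termOrdering le -> compatible W le ->
          forall i, LTis le (f i) U_(tnth Z i)%MM) /\
       ZSeparating gs Z f).
Proof.
split; first exact: CHECK_exists.
split; first exact: CHECK_det.
move=> W /CHECK_correct sep.
have [f f_sep] := fin_all_exists (fun i => sep _ (mem_tnth i Z)).
have sp_f i : inKSpan gs (f i) by case: (f_sep i).
have LT_f le : termOrdering le -> compatible W le ->
    forall i, LTis le (f i) U_(tnth Z i)%MM.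
  by move=> le_ord comp i; case: (f_sep i) => _; apply: compatible_LTis.
exists f; split=> //; split=> //; split=> [i|]; first exact: inKSpan_inIdeal.
exists (wlexLe W); split; first exact: wlexLe_termOrdering.
by apply: LT_f; [exact: wlexLe_termOrdering | exact: wlexLe_compatible].
Qed.
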